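(* Let $\Sigma$ be a finite set of tokens, $c$ a context, and $M,M_1,M_2$ arbitrary language models. Then there exists a token $t\in\Sigma$ that is $\ge\sqrt{MAE_c(M_1,M_2)}$-exposed by $M$ over $M_1$ at $c$ or $\ge\sqrt{MAE_c(M_1,M_2)}$-exposed by $M$ over $M_2$ at $c$.
   Context: Let $n=|\Sigma|$. A context is a finite sequence of tokens from $\Sigma$. A language model $M$ assigns to every context $c$ and token $t\in\Sigma$ a probability $p_M(t\mid c)>0$, with $\sum_{t\in\Sigma}p_M(t\mid c)=1$. For $g:\Sigma\to\mathbb{R}_{>0}$, $GM(g(t)):=\exp\big(\tfrac1n\sum_{t\in\Sigma}\log g(t)\big)$. Typical probability: $tp_c(M):=GM(p_M(t\mid c))$; relative probability: $rp_M(t\mid c):=p_M(t\mid c)/tp_c(M)$. Typical probability ratio: $tpr_c(M_1,M_2):=GM\big(\tfrac{p_{M_1}(t\mid c)}{p_{M_2}(t\mid c)}\big)$. A token $t$ is $\alpha$-exposed by $M_1$ over $M_2$ at $c$ if $\frac{p_{M_1}(t\mid c)}{p_{M_2}(t\mid c)\cdot tpr_c(M_1,M_2)}=\alpha$; it is $\ge\alpha$-exposed if it is $\beta$-exposed for some $\beta\ge\alpha$. Mean absolute exposure: $MAE_c(M_1,M_2):=GM\Big(\max\Big(\tfrac{rp_{M_1}(t\mid c)}{rp_{M_2}(t\mid c)},\tfrac{rp_{M_2}(t\mid c)}{rp_{M_1}(t\mid c)}\Big)\Big)$. *)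

From mathcomp Require Import all_boot all_order all_algebra.
From mathcomp Require Import all_classical all_reals all_analysis.
Set Implicit Arguments. Unset Strict Implicit. Unset Printing Implicit Defensive.
Import Order.TTheory GRing.Theory Num.Theory.
Local Open Scope ring_scope.

Section LM.
Variables (R : realType) (Sigma : finType).

Definition context := seq Sigma.

Definition model := context -> Sigma -> R.

Definition is_LM (M : model) : Prop :=
  (forall c t, 0 < M c t) /\ (forall c, \sum_(t : Sigma) M c t = 1).

Definition GM (g : Sigma -> R) : R :=
  expR ((#|Sigma|%:R)^-1 * \sum_(t : Sigma) ln (g t)).

Definition tp (M : model) (c : context) : R := GM (fun t => M c t).

Definition rp (M : model) (c : context) (t : Sigma) : R := M c t / tp M c.

Definition tpr (M1 M2 : model) (c : context) : R :=
  GM (fun t => M1 c t / M2 c t).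

Definition exposed (alpha : R) (M1 M2 : model) (c : context) (t : Sigma) : Prop :=
  M1 c t / (M2 c t * tpr M1 M2 c) = alpha.

Definition ge_exposed (alpha : R) (M1 M2 : model) (c : context) (t : Sigma) : Prop :=
  exists beta, alpha <= beta /\ exposed beta M1 M2 c t.

Definition MAE (M1 M2 : model) (c : context) : R :=
  GM (fun t => Num.max (rp M1 c t / rp M2 c t) (rp M2 c t / rp M1 c t)).

End LM.

From mathcomp Require Import all_boot all_order all_algebra.
From mathcomp Require Import all_classical all_reals all_analysis.
From mathcomp Require Import ring.
Set Implicit Arguments. Unset Strict Implicit.
Import Order.TTheory GRing.Theory Num.Theory.
Local Open Scope ring_scope.

(* Pass to logarithms centered at their mean over Sigma: if a, b, d are the
   centered logs of M, M1, M2 at c, the exposures of t by M over M1 and over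
   M2 are exp(a_t - b_t) and exp(a_t - d_t), and ln MAE is the mean of
   |b - d|.  As max(u, v) = (u + v)/2 + |u - v|/2 and u = a - b, v = a - d
   have mean zero, max(u_t, v_t) has mean (ln MAE)/2, hence is at least
   (ln MAE)/2 for some token t. *)

Section Averaging.
Variables (R : realFieldType) (T : finType).

Lemma exists_ge_mean (f : T -> R) :
  (0 < #|T|)%N -> exists t, #|T|%:R^-1 * \sum_s f s <= f t.
Proof.
move=> T_gt0; have [t0 _] := card_gt0P T_gt0.
have [t _ tmax] := @arg_maxP _ _ T t0 xpredT f isT.
exists t; rewrite ler_pdivrMl ?ltr0n //.
apply: le_trans (ler_sum _ (fun s _ => tmax s isT)) _.
by rewrite sumr_const mulr_natl.
Qed.

Lemma exists_max_ge_half_mean_dist (u v : T -> R) :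
  (0 < #|T|)%N -> \sum_t (u t + v t) = 0 ->
  exists t, #|T|%:R^-1 * (\sum_s `|u s - v s|) / 2 <= Num.max (u t) (v t).
Proof.
move=> T_gt0 sum_uv.
have -> : #|T|%:R^-1 * (\sum_s `|u s - v s|) / 2
          = #|T|%:R^-1 * \sum_s Num.max (u s) (v s).
  under [X in _ = _ * X]eq_bigr do rewrite maxr_absE mulrDl.
  by rewrite big_split /= -!mulr_suml sum_uv mul0r add0r mulrA.
exact: exists_ge_mean.
Qed.

End Averaging.

Section RealExp.
Variable R : realType.

Lemma max_expR_opp (x : R) : Num.max (expR x) (expR (- x)) = expR `|x|.
Proof.
rewrite -maxrN; case: (leP x (- x)) => [le_xNx | lt_Nxx].
  by rewrite !max_r // ler_expR.
by rewrite !max_l // ler_expR ltW.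
Qed.

Lemma sqrt_expR (z : R) : Num.sqrt (expR z) = expR (z / 2).
Proof.
have -> : expR z = expR (z / 2) ^+ 2 by rewrite expr2 -expRD -splitr.
by rewrite sqrtr_sqr ger0_norm // expR_ge0.
Qed.

End RealExp.

Section LogSpace.
Variables (R : realType) (Sigma : finType).

Definition centered_ln (g : Sigma -> R) (t : Sigma) : R :=
  ln (g t) - #|Sigma|%:R^-1 * \sum_s ln (g s).

Lemma GM_expR (f : Sigma -> R) :
  GM (fun t => expR (f t)) = expR (#|Sigma|%:R^-1 * \sum_t f t).
Proof. by rewrite /GM; under eq_bigr do rewrite expRK. Qed.

Lemma expR_centered_ln (g : Sigma -> R) t :
  (forall s, 0 < g s) -> expR (centered_ln g t) = g t / GM g.
Proof. by move=> g_gt0; rewrite expRB lnK ?posrE. Qed.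

Lemma sum_centered_ln (g : Sigma -> R) :
  (0 < #|Sigma|)%N -> \sum_t centered_ln g t = 0.
Proof.
move=> Sigma_gt0; rewrite sumrB sumr_const -[X in _ - X]mulr_natr mulrAC mulVf ?mul1r ?subrr //.
by rewrite pnatr_eq0 -lt0n.
Qed.

Lemma centered_ln_div (g h : Sigma -> R) t :
  (forall s, 0 < g s) -> (forall s, 0 < h s) ->
  centered_ln (fun s => g s / h s) t = centered_ln g t - centered_ln h t.
Proof.
move=> g_gt0 h_gt0; rewrite /centered_ln ln_div ?posrE //.
under eq_bigr do rewrite ln_div ?posrE //.
rewrite sumrB; ring.
Qed.

Lemma LM_card_gt0 (M : model R Sigma) : is_LM M -> (0 < #|Sigma|)%N.
Proof.
move=> [_ /(_ [::])]; rewrite lt0n; apply: contra_eqN => /eqP/card0_eq Sigma0.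
by rewrite big_pred0 // eq_sym oner_eq0.
Qed.

Lemma exposureE (M1 M2 : model R Sigma) c t : is_LM M1 -> is_LM M2 ->
  M1 c t / (M2 c t * tpr M1 M2 c)
  = expR (centered_ln (M1 c) t - centered_ln (M2 c) t).
Proof.
move=> [M1_gt0 _] [M2_gt0 _].
rewrite -centered_ln_div // expR_centered_ln => [|s]; last by rewrite divr_gt0.
by rewrite invfM mulrA.
Qed.

Lemma MAEE (M1 M2 : model R Sigma) c : is_LM M1 -> is_LM M2 ->
  MAE M1 M2 c = expR (#|Sigma|%:R^-1 *
    \sum_t `|centered_ln (M1 c) t - centered_ln (M2 c) t|).
Proof.
move=> [M1_gt0 _] [M2_gt0 _]; rewrite /MAE -GM_expR; congr GM; apply: funext => t.
rewrite /rp /tp -(expR_centered_ln t (M1_gt0 c)) -(expR_centered_ln t (M2_gt0 c)).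
by rewrite -!expRB -(opprB (centered_ln (M1 c) t)) max_expR_opp.
Qed.

End LogSpace.

Theorem theorem1 (R : realType) (Sigma : finType) (c : context Sigma)
  (M M1 M2 : model R Sigma) :
  is_LM M -> is_LM M1 -> is_LM M2 ->
  exists t : Sigma,
    ge_exposed (Num.sqrt (MAE M1 M2 c)) M M1 c t \/
    ge_exposed (Num.sqrt (MAE M1 M2 c)) M M2 c t.
Proof.
move=> LM LM1 LM2; have Sigma_gt0 := LM_card_gt0 LM.
set a := centered_ln (M c); set b := centered_ln (M1 c); set d := centered_ln (M2 c).
have sum_ab_ad : \sum_t ((a t - b t) + (a t - d t)) = 0.
  rewrite big_split /= [X in X + _]sumrB [X in _ + X]sumrB.
  by rewrite /a /b /d !sum_centered_ln // !subrr addr0.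
have [t] := exists_max_ge_half_mean_dist Sigma_gt0 sum_ab_ad.
have dist_ab_ad s : `|(a s - b s) - (a s - d s)| = `|b s - d s|.
  by rewrite -normrN; congr `|_|; ring.
under eq_bigr do rewrite dist_ab_ad.
rewrite le_max => /orP[le_ab | le_ad]; exists t; [left | right].
- exists (M c t / (M1 c t * tpr M M1 c)); split => //.
  by rewrite MAEE // sqrt_expR exposureE // ler_expR; exact: le_ab.
- exists (M c t / (M2 c t * tpr M M2 c)); split => //.
  by rewrite MAEE // sqrt_expR exposureE // ler_expR; exact: le_ad.
Qed.
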